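(* Let $n\ge2$. Suppose there is an algorithm which, given $g,h\in H_n\rtimes S_n$, decides whether there exists $x\in H_n^*(g)$ with $x^{-1}gx=h$. Then there is an algorithm which, given $g,h\in H_n\rtimes S_n$, decides whether there exists $x\in H_n$ with $x^{-1}gx=h$.
   Context: $\mathbb{N}=\{1,2,\dots\}$, $X_n=\{1,\dots,n\}\times\mathbb{N}$, permutations act on the right. $H_n$ is the group of bijections $g$ of $X_n$ with $z_i(g)\in\mathbb{N}$, $t_i(g)\in\mathbb{Z}$ such that $(i,m)g=(i,m+t_i(g))$ for all $m\ge z_i(g)$. $S_n$ acts by $(i,m)\sigma=(i\sigma,m)$; $H_n\rtimes S_n\le\mathrm{Sym}(X_n)$ is generated by $H_n$ and these (elements given as words in a finite generating set); each $g$ is uniquely $\omega_g\sigma_g$ with $\omega_g\in H_n$, $\sigma_g\in S_n$, $t_i(g):=t_i(\omega_g)$. $[i]_g$ is the orbit of $i$ under $\langle\sigma_g\rangle$, $t_{[i]}(g)=\sum_{k\in[i]_g}t_k(g)$, $I(g)=\{i:t_{[i]}(g)\ne0\}$. With $|\sigma_g|$ the order of $\sigma_g$, $H_n^*(g)=\{x\in H_n: t_i(x)\equiv0\bmod\big||\sigma_g|\,t_{[i]}(g)\big| \text{ for all } i\in I(g)\}$. *)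

From mathcomp Require Import all_boot all_order all_algebra all_fingroup.
Set Implicit Arguments. Unset Strict Implicit. Unset Printing Implicit Defensive.
Import GRing.Theory Num.Theory.

(* Points of X_n: (i, m) with i : 'I_n (ray i+1 of the paper) and m : nat
   (the paper's m+1; the shift is harmless for all notions below).          *)
Definition pt (n : nat) := ('I_n * nat)%type.

(* Maps on X_n are written as functions; right action: (p)g = g p, so the
   product gh of the paper is the function h \o g. *)

(* f is eventually a translation with translation vector t:
   (i,m)f = (i, m + t i) for all m >= z_i (uniform z suffices). *)
Definition transl n (f : pt n -> pt n) (t : 'I_n -> int) : Prop :=
  exists z : nat, forall (i : 'I_n) (m : nat), (z <= m)%N ->
    (f (i, m)).1 = i /\ Posz (f (i, m)).2 = (Posz m + t i)%R.

Definition in_H n (f : pt n -> pt n) : Prop :=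
  bijective f /\ exists t, transl f t.

Definition sact n (s : 'S_n) (p : pt n) : pt n := (s p.1, p.2).

Definition HS_decomp n (g : pt n -> pt n) (w : pt n -> pt n) (s : 'S_n) : Prop :=
  in_H w /\ forall p, g p = sact s (w p).

Definition torb n (s : 'S_n) (tg : 'I_n -> int) (i : 'I_n) : int :=
  (\sum_(k in porbit s i) tg k)%R.

Definition in_Hstar n (g : pt n -> pt n) (x : pt n -> pt n) : Prop :=
  in_H x /\
  exists (w : pt n -> pt n) (s : 'S_n) (tg tx : 'I_n -> int),
    [/\ HS_decomp g w s, transl w tg, transl x tx &
        forall i : 'I_n, torb s tg i != 0%R ->
          ((Posz #[s]%g * torb s tg i)%R %| tx i)%Z].

Definition conj_to n (x g h : pt n -> pt n) : Prop :=
  exists xi : pt n -> pt n,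
    [/\ cancel x xi, cancel xi x & forall p, x (g (xi p)) = h p].

(* Generators: all sigma in S_n (inl sigma); inr false = the translation tr
   along the line ray0 ∪ ray1; inr true = the transposition of (0,0),(0,1). *)
Definition gen n := ('S_n + bool)%type.
Definition letter n := (gen n * bool)%type.  (* bool = inverse flag *)
Definition word n := seq (letter n).

Definition tr_f n (p : pt n) : pt n :=
  let: (i, m) := p in
  if val i == 0 then (i, m.+1)
  else if val i == 1 then (if m is m'.+1 then (i, m') else (insubd i 0, 0))
  else (i, m).

Definition tr_inv n (p : pt n) : pt n :=
  let: (i, m) := p in
  if val i == 0 then (if m is m'.+1 then (i, m') else (insubd i 1, 0))
  else if val i == 1 then (i, m.+1)
  else (i, m).

Definition sw_f n (p : pt n) : pt n :=
  let: (i, m) := p in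
  if val i == 0 then (if m == 0 then (i, 1) else if m == 1 then (i, 0) else (i, m))
  else (i, m).

Definition gen_fun n (a : gen n) (inv : bool) : pt n -> pt n :=
  match a with
  | inl s => if inv then sact s^-1 else sact s
  | inr false => if inv then @tr_inv n else @tr_f n
  | inr true => @sw_f n
  end.

Definition evalw n (w : word n) : pt n -> pt n :=
  fun p => foldl (fun q (l : letter n) => gen_fun l.1 l.2 q) p w.

Inductive prog : Type :=
| PZero
| PSucc
| PProj (i : nat)
| PComp (f : prog) (gs : seq prog)
| PPrec (f g : prog)
| PMin (f : prog).

Inductive eval : prog -> seq nat -> nat -> Prop :=
| ev_zero xs : eval PZero xs 0
| ev_succ x xs : eval PSucc (x :: xs) x.+1
| ev_proj i xs : (i < size xs)%N -> eval (PProj i) xs (nth 0 xs i)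
| ev_comp f gs xs ys y : evals gs xs ys -> eval f ys y -> eval (PComp f gs) xs y
| ev_prec0 f g xs y : eval f xs y -> eval (PPrec f g) (0 :: xs) y
| ev_precS f g k xs r y :
    eval (PPrec f g) (k :: xs) r -> eval g (k :: r :: xs) y ->
    eval (PPrec f g) (k.+1 :: xs) y
| ev_min f xs k :
    eval f (k :: xs) 0 ->
    (forall j, (j < k)%N -> exists2 r, (0 < r)%N & eval f (j :: xs) r) ->
    eval (PMin f) xs k
with evals : seq prog -> seq nat -> seq nat -> Prop :=
| evs_nil xs : evals [::] xs [::]
| evs_cons g gs xs y ys : eval g xs y -> evals gs xs ys -> evals (g :: gs) xs (y :: ys).

Definition code_letter n (l : letter n) : nat := val (enum_rank l).
Definition code_word n (w : word n) : nat :=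
  foldr (fun x c => 2 ^ x * (2 * c + 1)) 0 (map (@code_letter n) w).

Definition decidable2 n (P : word n -> word n -> Prop) : Prop :=
  exists e : prog, forall w1 w2 : word n,
    (P w1 w2 -> eval e [:: code_word w1; code_word w2] 1) /\
    (~ P w1 w2 -> eval e [:: code_word w1; code_word w2] 0).

(* Conjugators can be normalised into H_n^*(g). The translation lengths of an element
   of H_n sum to zero. For j <> 0 let T_j be the generating translation conjugated by
   the transposition (1 j); it moves ray 0 up and ray j down by one step. Replacing a
   conjugator x by x T_j^a with a = t_j(x) mod P, successively for every j <> 0, makes
   all translation lengths divisible by P := (n! n c)!, where c >= |g| is the code of
   the word g; P is a multiple of every |sigma_g| t_[i](g), so the new conjugator lies
   in H_n^*(g). It conjugates g to T^-a h T^a, hence g and h are H_n-conjugate iff one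
   of the finitely many pairs (g, T^-a h T^a) with all exponents below P is
   H_n^*(g)-conjugate, a bounded search that only calls the given decision procedure. *)

From mathcomp Require Import all_boot all_order all_algebra all_fingroup.
From mathcomp Require Import zify.
From Stdlib Require Import Classical.
Set Implicit Arguments. Unset Strict Implicit. Unset Printing Implicit Defensive.
Import Order.TTheory GRing.Theory Num.Theory.

Lemma eval_proj_nth i xs y : nth 0 xs i = y -> (i < size xs)%N -> eval (PProj i) xs y.
Proof. by move=> <-; apply: ev_proj. Qed.

Lemma eval_comp1 f g xs y z :
  eval g xs y -> eval f [:: y] z -> eval (PComp f [:: g]) xs z.
Proof. by move=> ev_g; apply: ev_comp (evs_cons ev_g (evs_nil _)). Qed.

Lemma eval_comp2 f g1 g2 xs y1 y2 z :
  eval g1 xs y1 -> eval g2 xs y2 -> eval f [:: y1; y2] z ->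
  eval (PComp f [:: g1; g2]) xs z.
Proof.
by move=> ev1 ev2; apply: ev_comp (evs_cons ev1 (evs_cons ev2 (evs_nil _))).
Qed.

Lemma eval_prec_ind f g xs (R : nat -> nat -> Prop) :
  (exists2 y, eval f xs y & R 0 y) ->
  (forall k r, R k r -> exists2 y, eval g (k :: r :: xs) y & R k.+1 y) ->
  forall k, exists2 y, eval (PPrec f g) (k :: xs) y & R k y.
Proof.
move=> [y0 ev0 R0] step; elim=> [|k [r ev_r Rr]]; first by exists y0 => //; exact: ev_prec0.
by have [y ev_y Ry] := step k r Rr; exists y => //; exact: ev_precS ev_r ev_y.
Qed.

Lemma eval_prec f g xs (h : nat -> nat) :
  eval f xs (h 0) -> (forall k, eval g (k :: h k :: xs) (h k.+1)) ->
  forall k, eval (PPrec f g) (k :: xs) (h k).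
Proof.
move=> ev0 step k.
have [y ev <-] : exists2 y, eval (PPrec f g) (k :: xs) y & y = h k.
  apply: (eval_prec_ind (R := fun k y => y = h k)) => [|{}k _ ->].
  - by exists (h 0).
  - by exists (h k.+1).
exact: ev.
Qed.

Fixpoint prog_const (k : nat) : prog :=
  if k is k'.+1 then PComp PSucc [:: prog_const k'] else PZero.

Lemma eval_const k xs : eval (prog_const k) xs k.
Proof. by elim: k => [|k IH]; [exact: ev_zero | apply: eval_comp1 IH (ev_succ _ _)]. Qed.

Definition prog_add := PPrec (PProj 0) (PComp PSucc [:: PProj 1]).

Lemma eval_add k y xs : eval prog_add (k :: y :: xs) (k + y).
Proof.
apply: (eval_prec (h := addn^~ y)) => [|{}k]; first exact: eval_proj_nth.
by apply: eval_comp1 (ev_succ _ _); apply: eval_proj_nth.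
Qed.

Definition prog_mul := PPrec PZero (PComp prog_add [:: PProj 1; PProj 2]).

Lemma eval_mul k y xs : eval prog_mul (k :: y :: xs) (k * y).
Proof.
apply: (eval_prec (h := muln^~ y)) => [|{}k]; first exact: ev_zero.
rewrite mulSn addnC.
by apply: eval_comp2 (eval_add _ _ _); apply: eval_proj_nth.
Qed.

Definition prog_exp2 := PPrec (prog_const 1) (PComp prog_mul [:: prog_const 2; PProj 1]).

Lemma eval_exp2 k xs : eval prog_exp2 (k :: xs) (2 ^ k).
Proof.
apply: (eval_prec (h := expn 2)) => [|{}k]; first exact: eval_const.
rewrite expnS.
by apply: eval_comp2 (eval_const _ _) _ (eval_mul _ _ _); apply: eval_proj_nth.
Qed.

Definition prog_fact :=
  PPrec (prog_const 1) (PComp prog_mul [:: PComp PSucc [:: PProj 0]; PProj 1]).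

Lemma eval_fact k xs : eval prog_fact (k :: xs) k`!.
Proof.
apply: (eval_prec (h := factorial)) => [|{}k]; first exact: eval_const.
rewrite factS; apply: eval_comp2 _ _ (eval_mul _ _ _).
- by apply: eval_comp1 (ev_succ _ _); apply: eval_proj_nth.
- exact: eval_proj_nth.
Qed.

Definition prog_sgn := PPrec PZero (prog_const 1).

Lemma eval_sgn k xs : eval prog_sgn (k :: xs) (0 < k)%N.
Proof.
by apply: (eval_prec (h := fun k => nat_of_bool (0 < k)%N)) => [|{}k];
  [exact: ev_zero | exact: eval_const].
Qed.

Definition prog_pred := PPrec PZero (PProj 0).

Lemma eval_pred k xs : eval prog_pred (k :: xs) k.-1.
Proof.
by apply: (eval_prec (h := predn)) => [|{}k]; [exact: ev_zero | exact: eval_proj_nth].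
Qed.

Definition prog_sub := PPrec (PProj 0) (PComp prog_pred [:: PProj 1]).

Lemma eval_sub b a xs : eval prog_sub (b :: a :: xs) (a - b).
Proof.
apply: (eval_prec (h := subn a)) => [|{}b]; first by rewrite subn0; exact: eval_proj_nth.
by rewrite subnS; apply: eval_comp1 (eval_pred _ _); apply: eval_proj_nth.
Qed.

(* The least [k] with [x.+1 - 2 ^ k = 0], i.e. with [x < 2 ^ k]: the binary length of [x]. *)
Definition prog_bitlen :=
  PMin (PComp prog_sub [:: PComp prog_exp2 [:: PProj 0]; PComp PSucc [:: PProj 1]]).

Lemma eval_bitlen x k xs : (x < 2 ^ k)%N -> (forall j, j < k -> 2 ^ j <= x)%N ->
  eval prog_bitlen (x :: xs) k.
Proof.
have ev j : eval (PComp prog_sub [:: PComp prog_exp2 [:: PProj 0]; PComp PSucc [:: PProj 1]])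
    (j :: x :: xs) (x.+1 - 2 ^ j).
  apply: eval_comp2 _ _ (eval_sub _ _ _).
  - by apply: eval_comp1 (eval_exp2 _ _); apply: eval_proj_nth.
  - by apply: eval_comp1 (ev_succ _ _); apply: eval_proj_nth.
move=> x_lt x_ge; apply: ev_min.
  by have := ev k; have /eqP -> : x.+1 - 2 ^ k == 0 by rewrite subn_eq0.
by move=> j /x_ge x_ge_j; exists (x.+1 - 2 ^ j); rewrite ?subn_gt0 ?ltnS.
Qed.

Section Decidability.
Variable n : nat.
Implicit Types (v u w g h : word n) (P Q : word n -> word n -> Prop).

Lemma decidable2P P :
  (exists e, forall g h,
     exists2 b : bool, eval e [:: code_word g; code_word h] b & b <-> P g h) <->
  decidable2 P.
Proof.
split=> [[e He] | [e He]]; exists e => g h.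
  have [b ev_b bP] := He g h; split=> HP.
    by move/bP: HP => b_true; rewrite b_true in ev_b.
  by case: b ev_b bP => // _ [/(_ isT)].
have [HP | HP] := classic (P g h).
  by exists true; [exact: (He g h).1 | split].
by exists false; [exact: (He g h).2 | split].
Qed.

Lemma decidable2_ext P Q : (forall g h, P g h <-> Q g h) -> decidable2 P -> decidable2 Q.
Proof.
move=> PQ [e He]; exists e => g h; have [H1 H0] := He g h.
by split=> [/PQ/H1 | nQ]; last by apply: H0 => /PQ.
Qed.

Definition code_len w := sumn [seq (code_letter l).+1 | l <- w].

Lemma code_word_cons l w :
  code_word (l :: w) = 2 ^ code_letter l * (2 * code_word w + 1).
Proof. by []. Qed.

Lemma code_len_cons l w : code_len (l :: w) = (code_letter l).+1 + code_len w.
Proof. by []. Qed.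

Lemma code_word_cat v w : code_word (v ++ w) = code_word v + 2 ^ code_len v * code_word w.
Proof.
elim: v => [|l v IH] /=; first by rewrite add0n mul1n.
rewrite !code_word_cons IH code_len_cons expnD expnS.
set c := code_word v; set d := code_word w; set X := 2 ^ code_letter l; set Y := 2 ^ code_len v.
nia.
Qed.

Lemma code_word_lt w : code_word w < 2 ^ code_len w.
Proof.
elim: w => [|l w IH] //; rewrite code_word_cons code_len_cons expnD expnS.
have : 0 < 2 ^ code_letter l by rewrite expn_gt0.
move: IH; set c := code_word w; set L := 2 ^ code_len w; set X := 2 ^ code_letter l; nia.
Qed.

Lemma code_word_ge w : 2 ^ code_len w <= (code_word w).*2.+1.
Proof.
elim: w => [|l w IH] //; rewrite code_word_cons code_len_cons expnD expnS -!muln2.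
have : 0 < 2 ^ code_letter l by rewrite expn_gt0.
move: IH; rewrite -muln2.
set c := code_word w; set L := 2 ^ code_len w; set X := 2 ^ code_letter l; nia.
Qed.

Lemma size_code_word w : size w <= code_word w.
Proof.
elim: w => [|l w IH] //; rewrite code_word_cons /=.
have : 0 < 2 ^ code_letter l by rewrite expn_gt0.
move: IH; set c := code_word w; set X := 2 ^ code_letter l; nia.
Qed.

Lemma eval_bitlen_code w xs : eval prog_bitlen (code_word w :: xs) (code_len w).
Proof.
apply: eval_bitlen => [|j lt_j]; first exact: code_word_lt.
have := code_word_ge w; have : 2 ^ j.+1 <= 2 ^ code_len w by rewrite leq_exp2l.
rewrite expnS; lia.
Qed.

Definition conj_iter v u a h := iter a (fun x => v ++ x ++ u) h.

(* [x |-> code v + 2 ^ code_len v * (x + 2 ^ bitlen x * code u)], by [code_word_cat]. *)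
Definition prog_conj_step v u :=
  PComp prog_add [:: prog_const (code_word v); PComp prog_mul [:: prog_const (2 ^ code_len v);
     PComp prog_add [:: PProj 0; PComp prog_mul [:: PComp prog_exp2 [:: PComp prog_bitlen [:: PProj 0]];
        prog_const (code_word u)]]]].

Lemma eval_conj_step v u h xs :
  eval (prog_conj_step v u) (code_word h :: xs) (code_word (v ++ h ++ u)).
Proof.
rewrite !code_word_cat.
apply: eval_comp2 (eval_const _ _) _ (eval_add _ _ _).
apply: eval_comp2 (eval_const _ _) _ (eval_mul _ _ _).
apply: eval_comp2 _ _ (eval_add _ _ _); first exact: eval_proj_nth.
apply: eval_comp2 _ (eval_const _ _) (eval_mul _ _ _).
apply: eval_comp1 (eval_exp2 _ _).
by apply: eval_comp1 (eval_bitlen_code _ _); apply: eval_proj_nth.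
Qed.

Definition prog_conj_iter v u := PPrec (PProj 0) (PComp (prog_conj_step v u) [:: PProj 1]).

Lemma eval_conj_iter v u h a xs :
  eval (prog_conj_iter v u) (a :: code_word h :: xs) (code_word (conj_iter v u a h)).
Proof.
apply: (eval_prec (h := fun a => code_word (conj_iter v u a h))) => [|{}a].
  exact: eval_proj_nth.
by apply: eval_comp1 (eval_conj_step _ _ _ _); apply: eval_proj_nth.
Qed.

Lemma decidable2_bounded_conj P B (bnd : word n -> nat) v u :
  (forall g xs, eval B (code_word g :: xs) (bnd g)) -> decidable2 P ->
  decidable2 (fun g h => exists2 a, a < bnd g & P g (conj_iter v u a h)).
Proof.
move=> ev_B /decidable2P[e He]; apply/decidable2P.
pose count := PPrec PZero (PComp prog_add [:: PProj 1;
  PComp e [:: PProj 2; PComp (prog_conj_iter v u) [:: PProj 0; PProj 3]]]).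
exists (PComp prog_sgn [:: PComp count [:: B; PProj 0; PProj 1]]) => g h.
have [s ev_s sP] : exists2 s, eval count [:: bnd g; code_word g; code_word h] s &
    0 < s <-> exists2 a, a < bnd g & P g (conj_iter v u a h).
  apply: (eval_prec_ind (R := fun k s =>
    0 < s <-> exists2 a, a < k & P g (conj_iter v u a h))) => [|k s sP].
    by exists 0; [exact: ev_zero | split=> // -[]].
  have [b ev_b bP] := He g (conj_iter v u k h).
  exists (s + b).
    apply: eval_comp2 _ _ (eval_add _ _ _); first exact: eval_proj_nth.
    apply: eval_comp2 _ _ ev_b; first exact: eval_proj_nth.
    by apply: eval_comp2 _ _ (eval_conj_iter _ _ _ _ _); apply: eval_proj_nth.
  rewrite addn_gt0; split=> [/orP[/sP[a lt_a Pa] | b_gt0] | [a]].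
  - by exists a => //; exact: ltnW.
  - by exists k => //; apply/bP; case: b b_gt0 {ev_b bP}.
  rewrite ltnS leq_eqVlt => /orP[/eqP -> /bP -> | lt_a Pa]; first by rewrite orbT.
  by apply/orP; left; apply/sP; exists a.
exists (0 < s); last exact: sP.
apply: eval_comp1 (eval_sgn _ _).
apply: ev_comp ev_s; apply: evs_cons; first exact: ev_B.
by apply: evs_cons (evs_cons _ (evs_nil _)); apply: eval_proj_nth.
Qed.

End Decidability.

Section Translations.
Variable n : nat.
Implicit Types (f g : pt n -> pt n) (t : 'I_n -> int) (s : 'S_n).

Lemma transl_ext f g t t' : f =1 g -> t =1 t' -> transl f t -> transl g t'.
Proof. by move=> efg et [z Hz]; exists z => i m le_zm; rewrite -efg -et; apply: Hz. Qed.

Lemma transl_comp f g tf tg : transl f tf -> transl g tg ->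
  transl (g \o f) (fun i => tf i + tg i)%R.
Proof.
move=> [zf Hf] [zg Hg]; exists (zf + zg + \sum_j `|tf j|)%N => i m le_zm /=.
have tf_le : (`|tf i| <= \sum_j `|tf j|)%N by rewrite (bigD1 i) //= leq_addr.
have [fi_eq fm_eq] := Hf i m (leq_trans (leq_addr _ _) (leq_trans (leq_addr _ _) le_zm)).
case: (f (i, m)) fi_eq fm_eq => j m' /= -> fm_eq.
have [-> gm_eq] : (g (i, m')).1 = i /\ Posz (g (i, m')).2 = (Posz m' + tg i)%R.
  by apply: Hg; rewrite -lez_nat fm_eq; lia.
by split=> //; rewrite gm_eq fm_eq addrA.
Qed.

Lemma transl_conj f t s : transl f t ->
  transl (fun p => sact s^-1 (f (sact s p))) (fun i => t (s i)).
Proof. by move=> [z Hz]; exists z => i m /(Hz (s i))[/= -> ->]; rewrite permK. Qed.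

Lemma transl_iter f t a : transl f t -> transl (iter a f) (fun i => t i *+ a)%R.
Proof.
move=> Ht; elim: a => [|a IH]; first by exists 0%N => i m _ /=; rewrite addr0.
by apply: transl_ext (transl_comp IH Ht) => // i; rewrite mulrSr.
Qed.

Lemma in_H_can f fi t : cancel f fi -> cancel fi f -> transl f t -> in_H f.
Proof. by move=> fK fiK Ht; split; [exists fi | exists t]. Qed.

Lemma in_H_comp f g : in_H f -> in_H g -> in_H (g \o f).
Proof.
move=> [bij_f [tf Hf]] [bij_g [tg Hg]]; split; first exact: bij_comp.
by exists (fun i => tf i + tg i)%R; apply: transl_comp.
Qed.

Lemma in_H_id : in_H (@id (pt n)).
Proof. by apply: (@in_H_can _ id (fun _ => 0%R)) => //; exists 0%N => i m _; rewrite addr0. Qed.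

Lemma in_H_iter f a : in_H f -> in_H (iter a f).
Proof. by move=> Hf; elim: a => [|a IH]; [exact: in_H_id | exact: in_H_comp IH Hf]. Qed.

Lemma sactK s : cancel (sact s) (sact s^-1).
Proof. by move=> [i m]; rewrite /sact /= permK. Qed.

Lemma sactKV s : cancel (sact s^-1) (sact s).
Proof. by move=> [i m]; rewrite /sact /= permKV. Qed.

Lemma sactM s r p : sact r (sact s p) = sact (s * r) p.
Proof. by case: p => i m; rewrite /sact /= permM. Qed.

Lemma in_H_conj f s : in_H f -> in_H (fun p => sact s^-1 (f (sact s p))).
Proof.
move=> [[fi fK fiK] [t Ht]].
apply: (in_H_can (fi := fun p => sact s^-1 (fi (sact s p)))) (transl_conj s Ht).
- by move=> p; rewrite sactKV fK sactK.
- by move=> p; rewrite sactKV fiK sactK.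
Qed.

Definition box (r : 'I_n -> nat) : seq (pt n) :=
  [seq (i, m) | i <- enum 'I_n, m <- iota 0 (r i)].

Lemma mem_box r p : (p \in box r) = (p.2 < r p.1)%N.
Proof.
case: p => i m; apply/allpairsPdep/idP => [[j [k [_]]]|lt_m].
  by rewrite mem_iota => lt_k [-> ->].
by exists i, m; rewrite mem_enum mem_iota.
Qed.

Lemma box_uniq r : uniq (box r).
Proof.
apply: allpairs_uniq_dep => [|i _|]; rewrite ?enum_uniq ?iota_uniq //.
by move=> [i m] [j k] _ _ /= [-> ->].
Qed.

Lemma size_box r : size (box r) = (\sum_i r i)%N.
Proof.
rewrite size_allpairs_dep sumnE big_map big_enum /=.
by apply: eq_bigr => i _; rewrite size_iota.
Qed.

(* For [N] large, [f] maps the box of height [N] bijectively onto the box with column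
   heights [N + t i]; comparing sizes gives [n * N = \sum_i (N + t i)]. *)
Lemma transl_sum_eq0 f t : in_H f -> transl f t -> (\sum_i t i = 0)%R.
Proof.
move=> [[fi fK fiK] _] [z Hz].
pose N := (z + \sum_i `|t i|)%N.
have t_le i : (`|t i| <= N)%N by rewrite /N (bigD1 i) //= addnCA leq_addr.
pose b i := `|(Posz N + t i)%R|%N.
have bE i : Posz (b i) = (Posz N + t i)%R by rewrite /b gez0_abs //; have := t_le i; lia.
have f_box p : p \in box (fun=> N) -> f p \in box b.
  case: p => i m; rewrite !mem_box /= => lt_mN; case E: (f (i, m)) => [j m'] /=.
  rewrite ltnNge; apply/negP => le_bm.
  pose m'' := `|(Posz m' - t j)%R|%N.
  have m''E : Posz m'' = (Posz m' - t j)%R by rewrite gez0_abs; have := bE j; lia.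
  have [] := Hz j m''; first by rewrite -lez_nat m''E; have := bE j; lia.
  case E': (f (j, m'')) => [j' k] /= j'E kE; subst j'.
  have : f (j, m'') = f (i, m) by rewrite E E'; congr (_, _); apply/eqP; rewrite -eqz_nat kE m''E; lia.
  by move/(can_inj fK) => [_ m_eq]; move: lt_mN m''E; rewrite -m_eq; have := bE j; lia.
have fi_box p : p \in box b -> fi p \in box (fun=> N).
  case: p => j m'; rewrite !mem_box /= => lt_m'b; case E: (fi (j, m')) => [i m] /=.
  rewrite ltnNge; apply/negP => le_Nm.
  have [] := Hz i m; first by move: le_Nm; rewrite /N; lia.
  have := fiK (j, m'); rewrite E; case: (f (i, m)) => _ _ [-> ->] /= ji mE; subst j.
  by move: lt_m'b; rewrite -ltz_nat mE bE; lia.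
have : perm_eq (map f (box (fun=> N))) (box b).
  apply: uniq_perm; rewrite ?(map_inj_uniq (can_inj fK)) ?box_uniq //.
  move=> p; apply/mapP/idP => [[q q_box ->] | p_box]; first exact: f_box.
  by exists (fi p); [exact: fi_box | rewrite fiK].
move/perm_size; rewrite size_map !size_box sum_nat_const card_ord => /(congr1 Posz).
rewrite (big_morph Posz PoszD (erefl _)) (eq_bigr _ (fun i _ => bE i)).
rewrite big_split /= sumr_const card_ord.
by rewrite -[LHS]addr0 (_ : (_ *+ _)%R = Posz (n * N)); [move/addrI | lia].
Qed.

End Translations.

Section Generators.
Variable n : nat.
Hypothesis n_ge2 : (2 <= n)%N.

Definition t_tr (i : 'I_n) : int := if val i == 0%N then 1%R else if val i == 1%N then (-1)%R else 0%R.

Lemma tr_fK : cancel (@tr_f n) (@tr_inv n).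
Proof.
move=> [[[|[|k]] lt_k] [|m]] //=; rewrite insubdK //=; last exact: leq_trans n_ge2.
by congr (_, _); apply: val_inj; rewrite insubdK.
Qed.

Lemma tr_invK : cancel (@tr_inv n) (@tr_f n).
Proof.
move=> [[[|[|k]] lt_k] [|m]] //=; rewrite insubdK //=.
by congr (_, _); apply: val_inj; rewrite insubdK //; exact: leq_trans n_ge2.
Qed.

Lemma sw_fK : involutive (@sw_f n).
Proof. by move=> [[[|k] lt_k] [|[|m]]]. Qed.

Lemma transl_tr_f : transl (@tr_f n) t_tr.
Proof.
exists 1%N; move=> [[|[|k]] lt_k] [|m] // _; rewrite /t_tr /=; split=> //.
- by rewrite -addn1.
- by rewrite -addn1 PoszD addrK.
- by rewrite addr0.
Qed.

Lemma transl_tr_inv : transl (@tr_inv n) (fun i => - t_tr i)%R.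
Proof.
exists 1%N; move=> [[|[|k]] lt_k] [|m] // _; rewrite /t_tr /=; split=> //.
- by rewrite -addn1 PoszD addrK.
- by rewrite opprK -addn1.
- by rewrite oppr0 addr0.
Qed.

Lemma transl_sw_f : transl (@sw_f n) (fun=> 0%R).
Proof. by exists 2%N; move=> [[|k] lt_k] [|[|m]] // _ /=; rewrite addr0. Qed.

Lemma in_H_gen c b : exists t, [/\ in_H (gen_fun (n:=n) (inr c) b),
  transl (gen_fun (n:=n) (inr c) b) t & forall i, (`|t i| <= 1)%N].
Proof.
have t_tr_le i : (`|t_tr i| <= 1)%N by rewrite /t_tr; case: ifP => //; case: ifP.
case: c => /=.
  by exists (fun=> 0%R); split=> //; [exact: in_H_can sw_fK sw_fK transl_sw_f | exact: transl_sw_f].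
case: b.
- exists (fun i => - t_tr i)%R; split=> [||i]; last by rewrite abszN.
  + exact: in_H_can tr_invK tr_fK transl_tr_inv.
  + exact: transl_tr_inv.
- by exists t_tr; split=> //; [exact: in_H_can tr_fK tr_invK transl_tr_f | exact: transl_tr_f].
Qed.

Lemma evalw_cat (u v : word n) p : evalw (u ++ v) p = evalw v (evalw u p).
Proof. by rewrite /evalw foldl_cat. Qed.

Lemma evalw_rcons (u : word n) l p : evalw (rcons u l) p = gen_fun l.1 l.2 (evalw u p).
Proof. by rewrite /evalw foldl_rcons. Qed.

Lemma evalw_decomp (g : word n) : exists w s tg,
  [/\ HS_decomp (evalw g) w s, transl w tg & forall i, (`|tg i| <= size g)%N].
Proof.
elim/last_ind: g => [|u l [w [s [tg [[Hw Hws] Htg tg_le]]]]].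
  exists id, 1%g, (fun=> 0%R); split=> //; last by exists 0%N => i m _; rewrite addr0.
  by split; [exact: in_H_id | move=> [i m]; rewrite /sact /= perm1].
case: l => [[r|c] b].
  exists w, (s * (if b then r^-1 else r))%g, tg; split=> // [|i].
    by split=> // p; rewrite evalw_rcons Hws; case: b; rewrite /= sactM.
  by rewrite size_rcons (leq_trans (tg_le i)).
have [tc [Hc Htc tc_le]] := in_H_gen c b.
exists ((fun p => sact s^-1 (gen_fun (inr c) b (sact s p))) \o w), s,
       (fun i => tg i + tc (s i))%R; split.
- split; first exact: in_H_comp Hw (in_H_conj s Hc).
  by move=> p; rewrite evalw_rcons Hws /= sactKV.
- exact: transl_comp Htg (transl_conj s Htc).
- by move=> i; rewrite size_rcons; have := tg_le i; have := tc_le (s i); lia.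
Qed.

End Generators.

Lemma iter_can T (f fi : T -> T) a : cancel f fi -> cancel (iter a f) (iter a fi).
Proof. by move=> fK; elim: a => [|a IH] x //; rewrite iterSr iterS fK IH. Qed.

Lemma conj_to_comp n (x y g h k : pt n -> pt n) :
  conj_to x g h -> conj_to y h k -> conj_to (y \o x) g k.
Proof.
move=> [xi [xK xiK cx]] [yi [yK yiK cy]]; exists (xi \o yi); split=> p /=.
- by rewrite yK xK.
- by rewrite xiK yiK.
- by rewrite cx cy.
Qed.

Lemma exists_nat_dvd_sub (x : int) (P : nat) : (0 < P)%N ->
  exists2 a : nat, (a < P)%N & (Posz P %| (x - Posz a)%R)%Z.
Proof.
move=> P_gt0; have mod_ge0 : (0 <= (x %% Posz P)%Z)%R by rewrite modz_ge0 // eqz_nat -lt0n.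
exists `|(x %% Posz P)%Z|%N; first by rewrite -ltz_nat gez0_abs // ltz_pmod // ltz_nat.
by rewrite gez0_abs // {1}(divz_eq x (Posz P)) addrK dvdz_mull.
Qed.

Lemma torb_le n s (t : 'I_n -> int) c i :
  (forall k, `|t k| <= c)%N -> (`|torb s t i| <= n * c)%N.
Proof.
move=> t_le; rewrite -lez_nat abszE /torb.
apply: le_trans (ler_norm_sum _ _ _) _.
apply: (@le_trans _ _ (\sum_(k : 'I_n) Posz c)%R); last by rewrite sumr_const card_ord; lia.
rewrite big_mkcond /=; apply: ler_sum => k _.
by case: (k \in _) => //; rewrite -abszE lez_nat.
Qed.

Section Reduction.
Variable n : nat.
Hypothesis n_ge2 : (2 <= n)%N.

Definition ray1 : 'I_n := Ordinal n_ge2.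

Definition shiftw (j : 'I_n) : word n :=
  [:: (inl (tperm ray1 j), false); (inr false, false); (inl (tperm ray1 j), true)].
Definition unshiftw (j : 'I_n) : word n :=
  [:: (inl (tperm ray1 j), false); (inr false, true); (inl (tperm ray1 j), true)].
Definition shift j := evalw (shiftw j).
Definition unshift j := evalw (unshiftw j).
Definition t_shift j i := t_tr (tperm ray1 j i).

Lemma shiftE j p : shift j p = sact (tperm ray1 j)^-1 (tr_f (sact (tperm ray1 j) p)).
Proof. by []. Qed.

Lemma unshiftE j p : unshift j p = sact (tperm ray1 j)^-1 (tr_inv (sact (tperm ray1 j) p)).
Proof. by []. Qed.

Lemma shiftK j : cancel (shift j) (unshift j).
Proof. by move=> p; rewrite shiftE unshiftE sactKV tr_fK // sactK. Qed.

Lemma unshiftK j : cancel (unshift j) (shift j).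
Proof. by move=> p; rewrite shiftE unshiftE sactKV tr_invK // sactK. Qed.

Lemma transl_shift j : transl (shift j) (t_shift j).
Proof. by apply: (transl_ext _ _ (transl_conj _ (transl_tr_f n))). Qed.

Lemma in_H_shift j : in_H (shift j).
Proof. exact: in_H_can (shiftK j) (unshiftK j) (transl_shift j). Qed.

Lemma in_H_unshift j : in_H (unshift j).
Proof.
apply: in_H_can (unshiftK j) (shiftK j) _.
by apply: (transl_ext _ _ (transl_conj _ (transl_tr_inv n))).
Qed.

Lemma t_shift_diag j : t_shift j j = (-1)%R.
Proof. by rewrite /t_shift tpermR. Qed.

Lemma t_shift_off (j i : 'I_n) : val j != 0%N -> val i != 0%N -> i != j -> t_shift j i = 0%R.
Proof.
move=> j0 i0 ij; rewrite /t_shift /t_tr.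
have val_neq1 (k : 'I_n) : k != ray1 -> val k != 1%N.
  by apply: contra => /eqP k1; apply/eqP/val_inj.
have [i1|i_ne1] := eqVneq i ray1.
  by rewrite i1 (tpermL ray1 j) (negbTE j0) (negbTE (val_neq1 _ _)) // eq_sym -i1.
by rewrite (tpermD (x := ray1)) ?(negbTE i0) ?(negbTE (val_neq1 i _)) // eq_sym.
Qed.

Lemma evalw_conj_iter j a (h : word n) p :
  evalw (conj_iter (unshiftw j) (shiftw j) a h) p = iter a (shift j) (evalw h (iter a (unshift j) p)).
Proof. by elim: a p => [|a IH] p //; rewrite iterS !evalw_cat IH iterSr. Qed.

Lemma conj_to_shift j a (h : word n) :
  conj_to (iter a (shift j)) (evalw h) (evalw (conj_iter (unshiftw j) (shiftw j) a h)).
Proof.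
exists (iter a (unshift j)); split=> [||p]; [exact/iter_can/shiftK | exact/iter_can/unshiftK |].
by rewrite evalw_conj_iter.
Qed.

Lemma conj_to_unshift j a (h : word n) :
  conj_to (iter a (unshift j)) (evalw (conj_iter (unshiftw j) (shiftw j) a h)) (evalw h).
Proof.
exists (iter a (shift j)); split=> [||p]; [exact/iter_can/unshiftK | exact/iter_can/shiftK |].
by rewrite evalw_conj_iter !(iter_can a (shiftK j)).
Qed.

Definition conj_H (g h : word n) := exists x, in_H x /\ conj_to x (evalw g) (evalw h).

Definition conj_Hstar (g h : word n) :=
  exists x, in_Hstar (evalw g) x /\ conj_to x (evalw g) (evalw h).

Definition search_bound (g : word n) := (n`! * n * code_word g)`!.

Definition prog_search_bound :=
  PComp prog_fact [:: PComp prog_mul [:: prog_const (n`! * n); PProj 0]].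

Lemma eval_search_bound g xs : eval prog_search_bound (code_word g :: xs) (search_bound g).
Proof.
apply: eval_comp1 (eval_fact _ _).
by apply: eval_comp2 (eval_const _ _) _ (eval_mul _ _ _); apply: eval_proj_nth.
Qed.

Lemma dvdn_search_bound (g : word n) (s : 'S_n) (tg : 'I_n -> int) i :
  (forall k, `|tg k| <= size g)%N -> torb s tg i != 0%R ->
  (#[s]%g * `|torb s tg i| %| search_bound g)%N.
Proof.
move=> tg_le torb_neq0; apply: dvdn_fact; rewrite muln_gt0 order_gt0 absz_gt0 torb_neq0 /=.
rewrite -mulnA leq_mul //; first by rewrite -card_Sn max_card.
exact: leq_trans (torb_le s i tg_le) (leq_mul (leqnn n) (size_code_word g)).
Qed.

Definition conj_search (js : seq 'I_n) : word n -> word n -> Prop :=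
  foldr (fun j Q g h => exists2 a, (a < search_bound g)%N &
           Q g (conj_iter (unshiftw j) (shiftw j) a h)) conj_Hstar js.

Lemma decidable2_conj_search js : decidable2 conj_Hstar -> decidable2 (conj_search js).
Proof. by move=> dec; elim: js => //= j js; apply: decidable2_bounded_conj eval_search_bound. Qed.

Lemma conj_search_sound js g h : conj_search js g h -> conj_H g h.
Proof.
elim: js h => [|j js IH] h /=; first by move=> [x [[Hx _] cx]]; exists x.
move=> [a _ /IH [x [Hx cx]]]; exists (iter a (unshift j) \o x); split.
  exact: in_H_comp Hx (in_H_iter a (in_H_unshift j)).
exact: conj_to_comp cx (conj_to_unshift j a h).
Qed.

Lemma conj_Hstar_of_dvd g h x tx : in_H x -> transl x tx -> conj_to x (evalw g) (evalw h) ->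
  (forall i, val i != 0%N -> (Posz (search_bound g) %| tx i)%Z) -> conj_Hstar g h.
Proof.
move=> Hx Htx cx dvd_tx.
have {}dvd_tx i : (Posz (search_bound g) %| tx i)%Z.
  have [i0|] := eqVneq (val i) 0%N; last exact: dvd_tx.
  have /eqP := transl_sum_eq0 Hx Htx; rewrite (bigD1 i) //= addr_eq0 => /eqP ->.
  rewrite rpredN; apply: rpred_sum => k ki; apply: dvd_tx.
  by apply: contra ki => /eqP k0; apply/eqP/val_inj; rewrite /= k0 i0.
have [w [s [tg [Hws Htg tg_le]]]] := evalw_decomp n_ge2 g.
exists x; split=> //; split=> //; exists w, s, tg, tx; split=> // i torb_neq0.
by apply: dvdz_trans (dvd_tx i); rewrite dvdzE abszM dvdn_search_bound.
Qed.

Lemma conj_search_complete g js : all (fun j : 'I_n => val j != 0%N) js ->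
  forall h x tx, in_H x -> transl x tx -> conj_to x (evalw g) (evalw h) ->
  (forall i, val i != 0%N -> i \notin js -> (Posz (search_bound g) %| tx i)%Z) ->
  conj_search js g h.
Proof.
elim: js => [_ h x tx Hx Htx cx dvd_tx | j js IH /andP[j0 js0] h x tx Hx Htx cx dvd_tx] /=.
  by apply: conj_Hstar_of_dvd Hx Htx cx _ => i i0; apply: dvd_tx.
have [a lt_a dvd_a] := exists_nat_dvd_sub (tx j) (fact_gt0 (n`! * n * code_word g)).
exists a => //.
apply: (IH js0 _ (iter a (shift j) \o x) (fun i => tx i + t_shift j i *+ a)%R).
- exact: in_H_comp Hx (in_H_iter a (in_H_shift j)).
- exact: transl_comp Htx (transl_iter a (transl_shift j)).
- exact: conj_to_comp cx (conj_to_shift j a h).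
move=> i i0 i_notin; have [->|ij] := eqVneq i j.
  by rewrite t_shift_diag mulNrn natz.
rewrite t_shift_off // mul0rn addr0; apply: dvd_tx => //.
by rewrite in_cons negb_or ij.
Qed.

End Reduction.

Theorem lemma4p11 (n : nat) (hn : (2 <= n)%N) :
  decidable2 (fun g h : word n =>
    exists x, in_Hstar (evalw g) x /\ conj_to x (evalw g) (evalw h)) ->
  decidable2 (fun g h : word n =>
    exists x, in_H x /\ conj_to x (evalw g) (evalw h)).
Proof.
move=> dec_star.
pose js := [seq j <- enum 'I_n | val j != 0%N].
apply: decidable2_ext (decidable2_conj_search hn js dec_star) => g h; split.
  exact: conj_search_sound.
move=> [x [Hx cx]]; have [_ [tx Htx]] := Hx.
apply: (conj_search_complete hn _ Hx Htx cx) => [|i i0]; last by rewrite mem_filter i0 mem_enum.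
by apply/allP => j; rewrite mem_filter => /andP[].
Qed.
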